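(* Let $G$ be the three-player game with $A_i=\{a_{i1},a_{i2},a_{i3}\}$ for $i=1,2,3$ and fitness vectors $\pi(a_{1r},a_{2c},a_{3k})$ given as follows (listed for row $r$ of player 1, column $c$ of player 2). For $a_{31}$: $r=1$: $(7,7,7),(3,0,3),(3,0,3)$; $r=2$: $(0,3,3),(7,7,0),(1,1,1)$; $r=3$: $(0,3,3),(1,1,1),(1,1,1)$. For $a_{32}$: $r=1$: $(3,3,0),(1,1,1),(1,1,1)$; $r=2$: $(1,1,1),(7,7,0),(1,1,1)$; $r=3$: $(7,0,7),(7,0,7),(7,0,7)$. For $a_{33}$: $r=1$: $(3,3,0),(1,1,1),(0,7,7)$; $r=2$: $(1,1,1),(7,7,0),(0,7,7)$; $r=3$: $(1,1,1),(1,1,1),(0,7,7)$. Then the strict Nash equilibrium $(a_{11},a_{21},a_{31})$ is not stable under perfect observability, and consequently no strategy profile of $G$ is stable under perfect observability.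
   Context: Preference types: $\Theta=\mathbb{R}^A$, $A=A_1\times A_2\times A_3$ (utility functions on $A$, extended multilinearly to mixed profiles); $\pi_i$ likewise extended. $\mathcal{M}(\Theta^3)$ is the set of product distributions $\mu=\mu_1\times\mu_2\times\mu_3$ with finitely supported marginals; $\operatorname{supp}\mu=\prod_i\operatorname{supp}\mu_i$, $\mu(\theta)=\prod_i\mu_i(\theta_i)$, $\mu_{-i}(\theta_{-i})=\prod_{j\ne i}\mu_j(\theta_j)$. Mutants: for nonempty $J\subseteq N=\{1,2,3\}$, a mutant sub-profile is $\tilde\theta_J\in\prod_{j\in J}(\Theta\setminus\operatorname{supp}\mu_j)$ with shares $\varepsilon\in(0,1)^{|J|}$, $\|\varepsilon\|=\max_j\varepsilon_j$; post-entry $\tilde\mu^\varepsilon_i=(1-\varepsilon_i)\mu_i+\varepsilon_i\delta_{\tilde\theta_i}$ for $i\in J$, $\tilde\mu^\varepsilon_i=\mu_i$ otherwise. Perfect observability: an equilibrium is a map $b:\operatorname{supp}\mu\to\prod_i\Delta(A_i)$ such that each $b(\theta)$ is a Nash equilibrium of the game with payoffs $\theta_1,\theta_2,\theta_3$; $B_1(\mu)$ is the set of these; $(\mu,b)$ is a configuration, with aggregate outcome $\varphi_{\mu,b}(a)=\sum_{\theta}\mu(\theta)\prod_i b_i(\theta)(a_i)$. Average fitness $\Pi_{\theta_i}(\mu;b)=\sum_{\theta'_{-i}}\mu_{-i}(\theta'_{-i})\pi_i(b(\theta_i,\theta'_{-i}))$. Balanced: equal average fitness of all types within each population. Focal set $B_1(\tilde\mu^\varepsilon;b)=\{\tilde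 b\in B_1(\tilde\mu^\varepsilon):\tilde b=b\text{ on }\operatorname{supp}\mu\}$. $(\mu,b)$ is stable if balanced and for every nonempty $J$ and every $\tilde\theta_J$ there is $\bar\epsilon\in(0,1)$ such that for all $\varepsilon$ with $\|\varepsilon\|<\bar\epsilon$ and all $\tilde b$ in the focal set, either (i) some $j\in J$ has $\Pi_{\theta_j}(\tilde\mu^\varepsilon;\tilde b)>\Pi_{\tilde\theta_j}(\tilde\mu^\varepsilon;\tilde b)$ for all $\theta_j\in\operatorname{supp}\mu_j$, or (ii) for every $i$ all types in $\operatorname{supp}\tilde\mu^\varepsilon_i$ have equal average fitness. A profile $\sigma\in\prod_i\Delta(A_i)$ is stable if $\varphi_\sigma(a)=\prod_i\sigma_i(a_i)$ is the aggregate outcome of a stable configuration. *)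

(* The reals of the paper are modelled by an arbitrary
   real closed field R. *)
From HB Require Import structures.
From mathcomp Require Import all_boot all_order all_algebra.
Set Implicit Arguments. Unset Strict Implicit. Unset Printing Implicit Defensive.
Import Order.TTheory GRing.Theory Num.Theory.
Local Open Scope ring_scope.

Section Game.
Variable R : rcfType.

(* Players N = 'I_3, each action set A_i = 'I_3 (index k stands for a_{i,k+1}). *)
Definition pprof := {ffun 'I_3 -> 'I_3}.
Definition Theta := {ffun pprof -> R}.            (* preference type: R^A *)
Definition mstrat := {ffun 'I_3 -> R}.
Definition mprof := {ffun 'I_3 -> mstrat}.
Definition tprof := {ffun 'I_3 -> Theta}.

Definition is_mstrat (t : mstrat) : Prop :=
  (forall a, 0 <= t a) /\ \sum_(a : 'I_3) t a = 1.
Definition is_mprof (s : mprof) : Prop := forall i, is_mstrat (s i).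

Definition ext (u : Theta) (s : mprof) : R :=
  \sum_(a : pprof) (\prod_(i < 3) s i (a i)) * u a.

Definition upd (s : mprof) (i : 'I_3) (t : mstrat) : mprof :=
  [ffun j => if j == i then t else s j].

Definition is_nash (th : tprof) (s : mprof) : Prop :=
  is_mprof s /\
  forall (i : 'I_3) (t : mstrat), is_mstrat t -> ext (th i) (upd s i t) <= ext (th i) s.

(* fitness table: fit_table[k][r][c] = pi(a_{1,r+1}, a_{2,c+1}, a_{3,k+1}) *)
Definition fit_table : seq (seq (seq (nat * nat * nat))) :=
  [:: [:: [:: (7,7,7); (3,0,3); (3,0,3)];
          [:: (0,3,3); (7,7,0); (1,1,1)];
          [:: (0,3,3); (1,1,1); (1,1,1)]];
      [:: [:: (3,3,0); (1,1,1); (1,1,1)];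
          [:: (1,1,1); (7,7,0); (1,1,1)];
          [:: (7,0,7); (7,0,7); (7,0,7)]];
      [:: [:: (3,3,0); (1,1,1); (0,7,7)];
          [:: (1,1,1); (7,7,0); (0,7,7)];
          [:: (1,1,1); (1,1,1); (0,7,7)]]]%N.

Definition fit (i : 'I_3) (a : pprof) : nat :=
  let '(x, y, z) :=
    nth (0,0,0)%N (nth [::] (nth [::] fit_table (a (inord 2))) (a (inord 0))) (a (inord 1)) in
  if val i == 0%N then x else if val i == 1%N then y else z.

Definition pi (i : 'I_3) : Theta := [ffun a => (fit i a)%:R].

(* A product distribution mu = mu_0 x mu_1 x mu_2 with finite supports is
   given by supports s i (duplicate-free lists) and weights w i. *)
Definition is_pop (s : 'I_3 -> seq Theta) (w : 'I_3 -> Theta -> R) : Prop :=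
  forall i, [/\ uniq (s i), (forall th, th \in s i -> 0 < w i th)
             & \sum_(th <- s i) w i th = 1].

Definition mkprof (x y z : Theta) : tprof :=
  [ffun i : 'I_3 => nth x [:: x; y; z] i].

(* supp mu = prod_i supp mu_i, as a list of type profiles *)
Definition prof_seq (s : 'I_3 -> seq Theta) : seq tprof :=
  flatten [seq [seq mkprof x y z | y <- s (inord 1), z <- s (inord 2)] | x <- s (inord 0)].

Definition is_eq (s : 'I_3 -> seq Theta) (b : tprof -> mprof) : Prop :=
  forall t, t \in prof_seq s -> is_nash t (b t).

Definition avg_fit (s : 'I_3 -> seq Theta) (w : 'I_3 -> Theta -> R)
    (b : tprof -> mprof) (i : 'I_3) (th : Theta) : R :=
  \sum_(t <- prof_seq s | t i == th)
     (\prod_(j < 3 | j != i) w j (t j)) * ext (pi i) (b t).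

Definition balanced (s : 'I_3 -> seq Theta) (w : 'I_3 -> Theta -> R)
    (b : tprof -> mprof) : Prop :=
  forall i th th', th \in s i -> th' \in s i ->
    avg_fit s w b i th = avg_fit s w b i th'.

Definition aggr (s : 'I_3 -> seq Theta) (w : 'I_3 -> Theta -> R)
    (b : tprof -> mprof) (a : pprof) : R :=
  \sum_(t <- prof_seq s) (\prod_(i < 3) w i (t i)) * (\prod_(i < 3) b t i (a i)).

(* post-entry population: mutants mt j with share e j enter populations j in J *)
Definition post_s (J : {set 'I_3}) (s : 'I_3 -> seq Theta) (mt : 'I_3 -> Theta)
    : 'I_3 -> seq Theta :=
  fun i => if i \in J then rcons (s i) (mt i) else s i.

Definition post_w (J : {set 'I_3}) (w : 'I_3 -> Theta -> R) (mt : 'I_3 -> Theta)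
    (e : 'I_3 -> R) : 'I_3 -> Theta -> R :=
  fun i th => if i \in J then
                (if th == mt i then e i else (1 - e i) * w i th)
              else w i th.

Definition stable (s : 'I_3 -> seq Theta) (w : 'I_3 -> Theta -> R)
    (b : tprof -> mprof) : Prop :=
  [/\ is_pop s w, is_eq s b, balanced s w b &
  forall (J : {set 'I_3}) (mt : 'I_3 -> Theta),
    J != set0 -> (forall j, j \in J -> mt j \notin s j) ->
    exists eb : R, 0 < eb < 1 /\
    forall e : 'I_3 -> R,
      (forall j, j \in J -> 0 < e j < 1) ->
      (forall j, j \in J -> e j < eb) ->
      let s' := post_s J s mt in
      let w' := post_w J w mt e in
      forall bt : tprof -> mprof,
        is_eq s' bt -> (forall t, t \in prof_seq s -> bt t = b t) ->
        (exists2 j, j \in J & forall th, th \in s j ->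
            avg_fit s' w' bt j (mt j) < avg_fit s' w' bt j th)
        \/ (forall i th th', th \in s' i -> th' \in s' i ->
              avg_fit s' w' bt i th = avg_fit s' w' bt i th')].

Definition stable_profile (sigma : mprof) : Prop :=
  exists s w b, stable s w b /\
    forall a : pprof, aggr s w b a = \prod_(i < 3) sigma i (a i).

Definition pure_prof (a : pprof) : mprof :=
  [ffun i => [ffun k => if k == a i then 1 else 0]].

End Game.

From Pilot Require Import Defs.
From HB Require Import structures.
From mathcomp Require Import all_boot all_order all_algebra lra.
Import Order.TTheory GRing.Theory Num.Theory.
Local Open Scope ring_scope.
Set Implicit Arguments. Unset Strict Implicit. Unset Printing Implicit Defensive.

(* An indifferent (constant-payoff) mutant enters every population.  Focal
   equilibria may be chosen freely on matches involving mutants: three mutants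
   play (a_11, a_21, a_31), which gives everyone the maximal fitness 7; two
   mutants play the profile against which the remaining incumbent gets 0 whatever
   it does, while they get 7; a lone mutant behaves like a fixed incumbent type.
   Replacing the incumbent of population k by a mutant in any match never lowers
   k's fitness and raises it from 0 to 7 against two mutants, so in every
   population the mutant is strictly fitter than that incumbent: mutants are
   neither driven out nor balanced, whatever the configuration. *)

Lemma ord3P (i : 'I_3) : [\/ i = inord 0, i = inord 1 | i = inord 2].
Proof.
case: i => [[|[|[|//]]] lt_i3]; [constructor 1|constructor 2|constructor 3];
  by apply: val_inj; rewrite /= inordK.
Qed.

Section FunctionUpdate.
Variables (I : finType) (T : Type).
Implicit Types (f : {ffun I -> T}) (k : I) (x y : T).

Definition fwith f k x : {ffun I -> T} := [ffun i => if i == k then x else f i].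

Lemma fwith_same f k x : fwith f k x k = x.
Proof. by rewrite ffunE eqxx. Qed.

Lemma fwith_other f k x i : i != k -> fwith f k x i = f i.
Proof. by rewrite ffunE => /negbTE ->. Qed.

Lemma fwithK f k x y : fwith (fwith f k x) k y = fwith f k y.
Proof. by apply/ffunP => i; rewrite !ffunE; case: (i == k). Qed.

Lemma fwith_id f k : fwith f k (f k) = f.
Proof. by apply/ffunP => i; rewrite ffunE; case: eqP => [->|]. Qed.
End FunctionUpdate.

Definition coop_prof : pprof := [ffun _ => ord0].

(* Row l: the opponents of player l play (a_23, a_33), (a_13, a_32), (a_12, a_22)
   respectively; the entry for l itself is irrelevant. *)
Definition punish_prof (l : 'I_3) : pprof :=
  [ffun i : 'I_3 => inord (nth 0 (nth [::] [:: [:: 0; 2; 2]; [:: 2; 0; 1]; [:: 1; 1; 0]] l) i)]%N.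

Lemma fit_coop i : fit i coop_prof = 7%N.
Proof. by case: (ord3P i) => ->; rewrite /fit !ffunE /= inordK. Qed.

Lemma fit_punish l x : fit l (fwith (punish_prof l) l x) = 0%N.
Proof.
by case: (ord3P l) => ->; case: (ord3P x) => ->;
  rewrite /fit !ffunE -!val_eqE /= !inordK.
Qed.

Lemma fit_punish_other l k x : k != l -> fit k (fwith (punish_prof l) l x) = 7%N.
Proof.
by case: (ord3P l) => ->; case: (ord3P k) => ->; case: (ord3P x) => ->;
  rewrite /fit !ffunE -!val_eqE /= ?inordK.
Qed.

Lemma fit_le7 i a : (fit i a <= 7)%N.
Proof.
rewrite /fit; move: (a _) (a _) (a _) => k r c.
by case: (ord3P k) => ->; case: (ord3P r) => ->; case: (ord3P c) => ->;
  rewrite !inordK //=; do 2?case: ifP.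
Qed.

Section MixedExtension.
Variable R : rcfType.

Definition pure_strat (x : 'I_3) : mstrat R := [ffun k => if k == x then 1 else 0].

Definition cst (c : R) : Theta R := [ffun _ => c].

Lemma pure_stratP x : is_mstrat (pure_strat x).
Proof.
split=> [k|]; first by rewrite ffunE; case: ifP.
by rewrite (bigD1 x) //= ffunE eqxx big1 ?addr0 // => y /negbTE; rewrite ffunE => ->.
Qed.

Lemma pure_profE p i : pure_prof R p i = pure_strat (p i).
Proof. by rewrite ffunE. Qed.

Lemma pure_profP p : is_mprof (pure_prof R p).
Proof. by move=> i; rewrite pure_profE; apply: pure_stratP. Qed.

Lemma upd_mprof (s : mprof R) i t : is_mprof s -> is_mstrat t -> is_mprof (upd s i t).
Proof. by move=> s_mixed t_mixed j; rewrite ffunE; case: ifP. Qed.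

Lemma upd_pure p l x : upd (pure_prof R p) l (pure_strat x) = pure_prof R (fwith p l x).
Proof. by apply/ffunP => i; rewrite !ffunE; case: (i == l). Qed.

Lemma sum_prob_prof (s : mprof R) : is_mprof s ->
  \sum_(a : pprof) \prod_(i < 3) s i (a i) = 1.
Proof.
move=> s_mixed; have -> : \sum_(a : pprof) \prod_(i < 3) s i (a i) =
  \prod_(i < 3) \sum_(x : 'I_3) s i x by rewrite bigA_distr_bigA.
by rewrite big1 // => i _; case: (s_mixed i).
Qed.

Lemma ext_cst c (s : mprof R) : is_mprof s -> ext (cst c) s = c.
Proof.
move=> s_mixed; rewrite /ext; under eq_bigr => a _ do rewrite ffunE.
by rewrite -mulr_suml sum_prob_prof // mul1r.
Qed.

Lemma ext_le (u : Theta R) M (s : mprof R) :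
  is_mprof s -> (forall a, u a <= M) -> ext u s <= M.
Proof.
move=> s_mixed u_le; rewrite -[M](ext_cst M s_mixed); apply: ler_sum => a _.
rewrite ffunE ler_wpM2l ?u_le //; apply: prodr_ge0 => i _; by case: (s_mixed i).
Qed.

Lemma ext_pure (u : Theta R) p : ext u (pure_prof R p) = u p.
Proof.
rewrite /ext (bigD1 p) //= big1 => [|i _]; last by rewrite !ffunE eqxx.
rewrite mul1r big1 ?addr0 // => a a_neq_p.
have /existsP[i a_neq_p_i] : [exists i, a i != p i].
  apply: contraR a_neq_p => /existsPn eq_ap.
  by apply/eqP/ffunP => i; apply/eqP/negPn.
by rewrite (bigD1 i) //= !ffunE (negbTE a_neq_p_i) !mul0r.
Qed.

Lemma prod_upd (s : mprof R) l t (a : pprof) :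
  \prod_(i < 3) upd s l t i (a i) = t (a l) * \prod_(i < 3 | i != l) s i (a i).
Proof.
rewrite (bigD1 l) //= ffunE eqxx; congr (_ * _).
by apply: eq_bigr => i /negbTE; rewrite ffunE => ->.
Qed.

Lemma ext_upd (u : Theta R) (s : mprof R) l t :
  ext u (upd s l t) = \sum_(x : 'I_3) t x * ext u (upd s l (pure_strat x)).
Proof.
rewrite /ext; under [RHS]eq_bigr => x _ do rewrite mulr_sumr.
rewrite exchange_big; apply: eq_bigr => a _ /=.
rewrite prod_upd; under eq_bigr => x _ do rewrite prod_upd ffunE !mulrA.
rewrite -!mulr_suml; congr (_ * _ * _).
rewrite (bigD1 (a l)) //= eqxx mulr1 big1 ?addr0 // => x x_neq.
by rewrite eq_sym (negbTE x_neq) mulr0.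
Qed.

Definition best_reply (u : Theta R) (p : pprof) (l : 'I_3) : pprof :=
  fwith p l [arg max_(x > ord0) u (fwith p l x)]%O.

Lemma best_reply_unimprovable (u : Theta R) p l t : is_mstrat t ->
  ext u (upd (pure_prof R (best_reply u p l)) l t) <= ext u (pure_prof R (best_reply u p l)).
Proof.
move=> [t_ge0 t_sum1]; rewrite ext_upd ext_pure -[X in _ <= X]mul1r -t_sum1 mulr_suml.
apply: ler_sum => x _; rewrite upd_pure ext_pure fwithK ler_wpM2l //.
by rewrite /best_reply; case: arg_maxP => // y _; apply.
Qed.

Definition indifferent (u : Theta R) := exists c, u = cst c.

Lemma is_nash_intro (th : tprof R) (s : mprof R) : is_mprof s ->
  (forall i, indifferent (th i) \/
     forall t, is_mstrat t -> ext (th i) (upd s i t) <= ext (th i) s) ->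
  is_nash th s.
Proof.
move=> s_mixed unimprovable; split=> // i t t_mixed.
case: (unimprovable i) => [[c ->]|]; last exact.
by rewrite !ext_cst //; apply: upd_mprof.
Qed.

Definition fresh_cst (r : seq (Theta R)) : Theta R :=
  cst (1 + \sum_(th <- r) `|th coop_prof|).

Lemma fresh_cst_notin r : fresh_cst r \notin r.
Proof.
have norm_sum_ge0 : 0 <= \sum_(th <- r) `|th coop_prof| by apply: sumr_ge0.
apply/negP => r_fresh.
have : `|fresh_cst r coop_prof| <= \sum_(th <- r) `|th coop_prof|.
  by rewrite (big_rem _ r_fresh) /= lerDl sumr_ge0.
rewrite ffunE ger0_norm; lra.
Qed.

Lemma fresh_cst_indifferent r : indifferent (fresh_cst r).
Proof. by eexists. Qed.
End MixedExtension.

Section ProfileLists.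
Variable R : rcfType.
Implicit Types (s : 'I_3 -> seq (Theta R)) (t : tprof R).

Lemma mkprof0 (x y z : Theta R) : mkprof x y z (inord 0) = x.
Proof. by rewrite ffunE inordK. Qed.

Lemma mkprof1 (x y z : Theta R) : mkprof x y z (inord 1) = y.
Proof. by rewrite ffunE inordK. Qed.

Lemma mkprof2 (x y z : Theta R) : mkprof x y z (inord 2) = z.
Proof. by rewrite ffunE inordK. Qed.

Lemma mkprof_eta t : mkprof (t (inord 0)) (t (inord 1)) (t (inord 2)) = t.
Proof. by apply/ffunP => i; case: (ord3P i) => ->; rewrite ?mkprof0 ?mkprof1 ?mkprof2. Qed.

Lemma prof_seqP s t : reflect (forall i, t i \in s i) (t \in prof_seq s).
Proof.
apply: (iffP flattenP) => [[_ /mapP[x s0x ->] /allpairsP[[y z] [s1y s2z ->]]] i|t_s].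
  by case: (ord3P i) => ->; rewrite ?mkprof0 ?mkprof1 ?mkprof2.
exists [seq mkprof (t (inord 0)) y z | y <- s (inord 1), z <- s (inord 2)].
  exact: map_f.
by rewrite -{1}[t]mkprof_eta; apply: allpairs_f.
Qed.

Lemma prof_seq_uniq s : (forall i, uniq (s i)) -> uniq (prof_seq s).
Proof.
move=> s_uniq; have -> : prof_seq s = [seq u | x <- s (inord 0),
    u <- [seq mkprof x y z | y <- s (inord 1), z <- s (inord 2)]].
  by congr flatten; apply: eq_map => x; rewrite map_id.
apply: allpairs_uniq_dep => // [x _|].
  apply: allpairs_uniq => // -[y z] [y' z'] _ _ /= eq_mk.
  by have := congr1 (fun t => (t (inord 1), t (inord 2))) eq_mk; rewrite /= !mkprof1 !mkprof2.
move=> p q /allpairsPdep[x [u [_ /allpairsP[[y z] [_ _ ->]] ->]]].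
move=> /allpairsPdep[x' [u' [_ /allpairsP[[y' z'] [_ _ ->]] ->]]] /= eq_mk.
have eq_x : x = x' by have := congr1 (fun t => t (inord 0)) eq_mk; rewrite /= !mkprof0.
by move: eq_mk; rewrite eq_x => ->.
Qed.

Lemma big_prof_seq_fwith s k a c (F : tprof R -> R) :
  (forall i, uniq (s i)) -> a \in s k -> c \in s k ->
  \sum_(t <- prof_seq s | t k == a) F t =
  \sum_(t <- prof_seq s | t k == c) F (fwith t k a).
Proof.
move=> s_uniq ska skc; rewrite -[LHS]big_filter -[RHS]big_filter.
rewrite -(big_map (fun t => fwith t k a) xpredT F).
have fwith_in t x : x \in s k -> t \in prof_seq s -> fwith t k x \in prof_seq s.
  move=> skx /prof_seqP t_s; apply/prof_seqP => i; rewrite ffunE.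
  by case: eqP => [->|].
apply/perm_big/uniq_perm => [||t].
- exact/filter_uniq/prof_seq_uniq.
- rewrite map_inj_in_uniq ?filter_uniq ?prof_seq_uniq // => t u.
  rewrite !mem_filter => /andP[/eqP tkc _] /andP[/eqP ukc _].
  move=> /(congr1 (fun v => fwith v k c)).
  by rewrite !fwithK -{1}tkc fwith_id -ukc fwith_id.
rewrite mem_filter; apply/andP/mapP => [[/eqP tka t_s]|[u]].
  exists (fwith t k c); last by rewrite fwithK -tka fwith_id.
  by rewrite mem_filter fwith_same eqxx fwith_in.
by rewrite mem_filter => /andP[_ u_s] ->; rewrite fwith_same eqxx fwith_in.
Qed.
End ProfileLists.

Lemma ext_pi_pure (R : rcfType) k (p : pprof) :
  ext (Defs.pi R k) (pure_prof R p) = (fit k p)%:R.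
Proof. by rewrite ext_pure ffunE. Qed.

Lemma ext_pi_le7 (R : rcfType) k (s : mprof R) :
  is_mprof s -> ext (Defs.pi R k) s <= 7%:R.
Proof. by move=> s_mixed; apply: ext_le => // a; rewrite ffunE ler_nat fit_le7. Qed.

Lemma post_sT (R : rcfType) (s : 'I_3 -> seq (Theta R)) mt i :
  post_s setT s mt i = rcons (s i) (mt i).
Proof. by rewrite /post_s in_setT. Qed.

Section Invasion.
Variables (R : rcfType) (s : 'I_3 -> seq (Theta R)) (w : 'I_3 -> Theta R -> R).
Variable b : tprof R -> mprof R.
Hypotheses (s_pop : is_pop s w) (b_eq : is_eq s b).
Implicit Types (t : tprof R) (i k l : 'I_3).

Definition mutant (i : 'I_3) : Theta R := fresh_cst (s i).

Definition resident (i : 'I_3) : Theta R := head (mutant i) (s i).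

Local Notation s' := (post_s setT s mutant).
Local Notation w' e := (post_w setT w mutant e).

Definition demutate (t : tprof R) : tprof R :=
  [ffun i => if t i == mutant i then resident i else t i].

Definition two_residents (t : tprof R) : bool :=
  [exists i, exists j, [&& i != j, t i != mutant i & t j != mutant j]].

Definition focal (t : tprof R) : mprof R :=
  if two_residents t then b (demutate t)
  else if [pick l | t l != mutant l] is Some l
    then pure_prof R (best_reply (t l) (punish_prof l) l)
  else pure_prof R coop_prof.

Lemma mutant_notin i : mutant i \notin s i.
Proof. exact: fresh_cst_notin. Qed.

Lemma resident_in i : resident i \in s i.
Proof.
case: (s_pop i) => _ _; rewrite /resident; case: (s i) => [|th r _] /=.
  by rewrite big_nil => /esym/eqP; rewrite oner_eq0.
exact: mem_head.
Qed.

Lemma resident_neq_mutant i : (resident i == mutant i) = false.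
Proof.
by apply: contraNF (mutant_notin i) => /eqP <-; apply: resident_in.
Qed.

Lemma post_entryP t :
  reflect (forall i, t i = mutant i \/ t i \in s i) (t \in prof_seq s').
Proof.
apply: (iffP (prof_seqP _ _)) => t_s' i; move: (t_s' i); rewrite post_sT mem_rcons inE.
  by case/orP=> [/eqP|]; [left|right].
by case=> ->; rewrite ?eqxx ?orbT.
Qed.

Lemma demutate_in t : t \in prof_seq s' -> demutate t \in prof_seq s.
Proof.
move/post_entryP => t_s'; apply/prof_seqP => i; rewrite ffunE.
case: (t_s' i) => [->|ti_s]; first by rewrite eqxx resident_in.
by case: ifP => // _; apply: resident_in.
Qed.

Lemma demutate_id t : t \in prof_seq s -> demutate t = t.
Proof.
move/prof_seqP => t_s; apply/ffunP => i; rewrite ffunE.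
by case: eqP => // t_mut; move: (t_s i); rewrite t_mut (negbTE (mutant_notin i)).
Qed.

Lemma lone_resident t l : ~~ two_residents t -> t l != mutant l ->
  forall i, i != l -> t i == mutant i.
Proof.
move=> /existsPn one_res tl i il; apply/negPn/negP => ti.
by move: (one_res i) => /existsPn/(_ l); rewrite il ti tl.
Qed.

Lemma focal_eq : is_eq s' focal.
Proof.
move=> t t_s'; rewrite /focal.
have mutant_indifferent i : t i == mutant i -> indifferent (t i).
  by move/eqP => ->; apply: fresh_cst_indifferent.
case: ifP => [_|/negbT one_res].
  have [b_mixed b_nash] := b_eq (demutate_in t_s').
  apply: is_nash_intro => // i.
  case: (boolP (t i == mutant i)) => [/mutant_indifferent|ti]; first by left.
  by right; move: (b_nash i); rewrite ffunE (negbTE ti).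
case: pickP => [l /= tl|all_mut].
  apply: is_nash_intro => [|i]; first exact: pure_profP.
  case: (eqVneq i l) => [->|il].
    by right; apply: best_reply_unimprovable.
  by left; apply/mutant_indifferent/(lone_resident one_res tl).
apply: is_nash_intro => [|i]; first exact: pure_profP.
by left; apply/mutant_indifferent/negPn; rewrite all_mut.
Qed.

Lemma focal_extends t : t \in prof_seq s -> focal t = b t.
Proof.
move=> t_s; have t_res i : t i != mutant i.
  by apply: contraNneq (mutant_notin i) => <-; move/prof_seqP: t_s.
rewrite /focal demutate_id //; case: ifP => // /negbT /existsPn /(_ ord0).
move=> /existsPn /(_ (inord 1)).
by rewrite -val_eqE /= inordK // !t_res.
Qed.

Lemma focal_payoff_le7 t k : t \in prof_seq s' -> ext (Defs.pi R k) (focal t) <= 7%:R.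
Proof. by move/focal_eq => [focal_mixed _]; apply: ext_pi_le7. Qed.

Lemma focal_payoff_mutant t k : t k == mutant k -> ~~ two_residents t ->
  ext (Defs.pi R k) (focal t) = 7%:R.
Proof.
move=> tk one_res; rewrite /focal (negbTE one_res).
case: pickP => [l /= tl|_]; last by rewrite ext_pi_pure fit_coop.
rewrite ext_pi_pure fit_punish_other //; apply: contraTneq tk => ->.
by rewrite tl.
Qed.

Lemma focal_payoff_lone_resident t k : t k != mutant k ->
  (forall i, i != k -> t i == mutant i) -> ext (Defs.pi R k) (focal t) = 0.
Proof.
move=> tk others_mut.
have one_res : ~~ two_residents t.
  apply/existsPn => i; apply/existsPn => j; apply/and3P => -[ij ti tj].
  case: (eqVneq i k) => [ik|]; last by move/others_mut; rewrite (negbTE ti).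
  by move: ij; rewrite ik eq_sym => /others_mut; rewrite (negbTE tj).
rewrite /focal (negbTE one_res); case: pickP => [l /= tl|/(_ k)]; last by rewrite tk.
have -> : l = k by apply: contraTeq tl => /others_mut ->.
by rewrite ext_pi_pure fit_punish.
Qed.

Lemma focal_payoff_mutant_ge t k : t \in prof_seq s' -> t k = resident k ->
  ext (Defs.pi R k) (focal t) <= ext (Defs.pi R k) (focal (fwith t k (mutant k))).
Proof.
move=> t_s' tk; set t' := fwith t k (mutant k).
have t'k : t' k == mutant k by rewrite fwith_same.
have [two_res'|one_res'] := boolP (two_residents t'); last first.
  by rewrite [X in _ <= X]focal_payoff_mutant //; apply: focal_payoff_le7.
have same_res i : t' i != mutant i -> t i = t' i.
  by case: (eqVneq i k) => [->|ik _]; [rewrite t'k | rewrite fwith_other].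
have two_res : two_residents t.
  case/existsP: two_res' => i /existsP[j /and3P[ij ti tj]].
  apply/existsP; exists i; apply/existsP; exists j.
  by rewrite ij (same_res i ti) (same_res j tj) ti tj.
suff eq_dem : demutate t = demutate t' by rewrite /focal two_res two_res' eq_dem.
apply/ffunP => i; rewrite !ffunE; case: (eqVneq i k) => [->|//].
by rewrite tk eqxx; case: ifP.
Qed.

Lemma focal_payoff_all_mutant k : ext (Defs.pi R k) (focal [ffun i => mutant i]) = 7%:R.
Proof.
apply: focal_payoff_mutant; first by rewrite ffunE.
by apply/existsPn => i; apply/existsPn => j; rewrite !ffunE eqxx andbF.
Qed.

Lemma post_entry_uniq i : uniq (s' i).
Proof. by rewrite post_sT rcons_uniq mutant_notin; case: (s_pop i). Qed.

Lemma mutant_in_post i : mutant i \in s' i.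
Proof. by rewrite post_sT mem_rcons mem_head. Qed.

Lemma resident_in_post i : resident i \in s' i.
Proof. by rewrite post_sT mem_rcons inE resident_in orbT. Qed.

Lemma post_entry_weight_gt0 (e : 'I_3 -> R) t k : (forall j, 0 < e j < 1) ->
  t \in prof_seq s' -> 0 < \prod_(j < 3 | j != k) w' e j (t j).
Proof.
move=> e_in01 /post_entryP t_s'; apply: prodr_gt0 => j _; rewrite /post_w in_setT.
have /andP[ej_gt0 ej_lt1] := e_in01 j; case: (s_pop j) => _ w_gt0 _.
case: (t_s' j) => [->|t_s]; first by rewrite eqxx.
by case: ifP => // _; rewrite mulr_gt0 ?w_gt0 ?subr_gt0.
Qed.

Lemma weight_fwith (v : 'I_3 -> Theta R -> R) t k x :
  \prod_(j < 3 | j != k) v j (fwith t k x j) = \prod_(j < 3 | j != k) v j (t j).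
Proof. by apply: eq_bigr => j jk; rewrite fwith_other. Qed.

Lemma avg_fit_mutant_gt (e : 'I_3 -> R) k : (forall j, 0 < e j < 1) ->
  avg_fit s' (w' e) focal k (resident k) < avg_fit s' (w' e) focal k (mutant k).
Proof.
move=> e_in01; have weight_gt0 := post_entry_weight_gt0 k e_in01.
rewrite /avg_fit (big_prof_seq_fwith _ post_entry_uniq (mutant_in_post k) (resident_in_post k)).
under [X in _ < X]eq_bigr => t _ do rewrite weight_fwith.
rewrite -subr_gt0 -sumrB big_seq_cond.
pose t0 := fwith [ffun i => mutant i] k (resident k).
have t0_s' : t0 \in prof_seq s'.
  apply/post_entryP => i; rewrite !ffunE.
  by case: eqP => [->|_]; [right; apply: resident_in | left].
rewrite (big_rem t0 t0_s') t0_s' fwith_same eqxx -mulrBr; apply: ltr_pwDl.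
  rewrite mulr_gt0 ?weight_gt0 // subr_gt0.
  have -> : fwith t0 k (mutant k) = [ffun i => mutant i].
    by apply/ffunP => i; rewrite !ffunE; case: eqP => [->|].
  rewrite focal_payoff_all_mutant focal_payoff_lone_resident ?ltr0n //.
    by rewrite fwith_same resident_neq_mutant.
  by move=> i ik; rewrite fwith_other // ffunE.
apply: sumr_ge0 => t /andP[t_s' /eqP tk].
rewrite -mulrBr mulr_ge0 ?subr_ge0 ?focal_payoff_mutant_ge //.
exact/ltW/weight_gt0.
Qed.

End Invasion.

Lemma no_stable_configuration (R : rcfType) (s : 'I_3 -> seq (Theta R)) w
  (b : tprof R -> mprof R) : ~ stable s w b.
Proof.
case=> s_pop b_eq _ invasion_repelled.
have [||eb [/andP[eb_gt0 eb_lt1] repelled]] := invasion_repelled setT (mutant s).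
- by apply/set0Pn; exists ord0.
- by move=> j _; apply: mutant_notin.
pose e : 'I_3 -> R := fun=> eb / 2.
have e_in01 j : 0 < e j < 1 by apply/andP; split; rewrite /e; lra.
have e_lt j : e j < eb by rewrite /e; lra.
have mutants_fitter k := avg_fit_mutant_gt s_pop b_eq k e_in01.
case: (repelled e (fun j _ => e_in01 j) (fun j _ => e_lt j) (focal s b)
  (focal_eq s_pop b_eq) (@focal_extends _ s b)) => [[k _ worse]|balanced'].
  by have := worse _ (resident_in s_pop k); rewrite ltNge (ltW (mutants_fitter k)).
have := mutants_fitter ord0; rewrite (balanced' ord0 _ (mutant s ord0)) ?ltxx //.
- exact: resident_in_post.
- exact: mutant_in_post.
Qed.

Theorem mainTheorem7 (R : rcfType) :
  ~ stable_profile (pure_prof R [ffun _ => ord0]) /\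
  (forall sigma : mprof R, is_mprof sigma -> ~ stable_profile sigma).
Proof.
split=> [|sigma _]; case=> [s [w [b [stable_sb _]]]];
  exact: no_stable_configuration stable_sb.
Qed.
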